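(* Let $M$ be a matroid and let $A=\{A_i\to M\}_{i\in I}$ be a Tutte covering of $M$. Then there exists a Tutte covering $A'=\{A'_k\to M\}_{k\in K}$ of $M$ which is a refinement of $A$ and which is indecomposable, i.e. every domain $A'_k$ is an indecomposable matroid.
   Context: A (finite) matroid $M=(X,\mathcal{I})$ is a finite set $X$ with a family $\mathcal{I}$ of subsets (independent sets) satisfying the usual independence axioms. A morphism of matroids $(X_1,\mathcal{I}_1)\to(X_2,\mathcal{I}_2)$ is an injective map $\varphi\colon X_1\to X_2$ with $\varphi(I)\in\mathcal{I}_2$ for all $I\in\mathcal{I}_1$; this gives the category $\mathbf{Mat}$, and $\mathbf{Mat}_+$ denotes $\mathbf{Mat}$ with a disjoint basepoint object $\ast$ (only morphism into $\ast$ is $1_\ast$). An element $e\in X$ is a loop if $\{e\}\notin\mathcal{I}$, a coloop if it lies in every basis, and non-degenerate if it is neither. For $e\in X$, $M\setminus e$ is the deletion (ground set $X\setminus\{e\}$, independent sets those of $M$ avoiding $e$) and $M/e$ the contraction (ground set $X\setminus\{e\}$; if $e$ is not a loop, independent sets are those $I$ with $I\cup\{e\}\in\mathcal{I}$); the inclusion $X\setminus\{e\}\subseteq X$ induces morphisms $M\setminus e\to M$ and $M/e\to M$. A matroid is indecomposable if all its elements are degenerate (loops or coloops). For a rooted binary tree $T$ with root $r_T$, let $\mathcal{C}_T$ be the poset category on its vertices with $w\le v$ iff $w=v$ or $w$ is a descendant of $v$. An elementary deletion–contraction tree of shape $T$ is a functor $\mathcal{F}\colon\mathcal{C}_T\to\mathbf{Mat}_+$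 with $\mathcal{F}(r_T)\neq\ast$, such that for an internal vertex $v$ with a single child $w$, $\mathcal{F}(w)=\mathcal{F}(v)$ and $\mathcal{F}(w\to v)$ is the identity, and for an internal vertex $v$ with two children $w_1,w_2$ there is a non-degenerate element $e$ of $M=\mathcal{F}(v)$ such that $\{\mathcal{F}(w_1)\to M,\mathcal{F}(w_2)\to M\}$ is $\{M/e\to M, M\setminus e\to M\}$ (in either order) with the standard inclusions. A deletion–contraction tree is a functor naturally isomorphic to an elementary one. A Tutte covering of a matroid $M\neq\ast$ is a family $\{f_j\colon M_j\to M\}_{j=1,\dots,p}$ such that there is a rooted binary tree $T$ with leaves $v_1,\dots,v_p$ and a deletion–contraction tree $\mathcal{F}$ with $\mathcal{F}(r_T)=M$ and $f_j=\mathcal{F}(v_j\to r_T)$ for all $j$. A family $\{f_i\colon A_i\to A\}_{i\in I}$ refines $\{g_j\colon B_j\to A\}_{j\in J}$ if for each $i$ there are $j\in J$ and a morphism $h\colon A_i\to B_j$ with $f_i=g_j\circ h$. *)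

From mathcomp Require Import all_boot.
Set Implicit Arguments. Unset Strict Implicit. Unset Printing Implicit Defensive.

Record pmatroid := PMatroid { ground : finType; indep : pred {set ground} }.
Arguments indep : clear implicits.

Definition is_matroid (M : pmatroid) : Prop :=
  [/\ indep M set0,
      (forall I J : {set ground M}, J \subset I -> indep M I -> indep M J)
    & (forall I J : {set ground M}, indep M I -> indep M J -> #|I| < #|J| ->
         exists2 x, x \in J :\: I & indep M (x |: I))].

Definition is_morphism (M N : pmatroid) (f : ground M -> ground N) : Prop :=
  injective f /\ forall I : {set ground M}, indep M I -> indep N (f @: I).

(* isomorphisms in Mat: bijections such that f and its inverse are morphisms *)
Definition is_iso (M N : pmatroid) (f : ground M -> ground N) : Prop :=
  bijective f /\ forall I : {set ground M}, indep N (f @: I) = indep M I.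

Definition is_basis (M : pmatroid) (B : {set ground M}) : bool :=
  indep M B && [forall x, (x \notin B) ==> ~~ indep M (x |: B)].

Definition is_loop (M : pmatroid) (e : ground M) : bool := ~~ indep M [set e].
Definition is_coloop (M : pmatroid) (e : ground M) : bool :=
  [forall B : {set ground M}, is_basis B ==> (e \in B)].
Definition degenerate (M : pmatroid) (e : ground M) : bool :=
  is_loop e || is_coloop e.
Definition nondegenerate (M : pmatroid) (e : ground M) : bool := ~~ degenerate e.
Definition indecomposable (M : pmatroid) : Prop := forall e : ground M, degenerate e.

Definition dcground (M : pmatroid) (e : ground M) : finType :=
  {x : ground M | x != e}.

Definition delete (M : pmatroid) (e : ground M) : pmatroid :=
  @PMatroid (dcground e) (fun I => indep M (val @: I)).

Definition contract (M : pmatroid) (e : ground M) : pmatroid :=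
  @PMatroid (dcground e)
    (fun I => if is_loop e then indep M (val @: I)
              else indep M (val @: I :|: [set e])).

Definition mto (M : pmatroid) := {N : pmatroid & ground N -> ground M}.

(* Shapes of elementary deletion-contraction trees rooted at a matroid M:
   a leaf; a vertex with a single child (carrying the same matroid, identity
   map); or a vertex with two children M/e and M\e (in either order, given by
   [swap]) for a non-degenerate element e. *)
Inductive dctree : pmatroid -> Type :=
| DCLeaf (M : pmatroid) : dctree M
| DCUnary (M : pmatroid) : dctree M -> dctree M
| DCBinary (M : pmatroid) (e : ground M) (swap : bool) :
    nondegenerate e -> dctree (@contract M e) -> dctree (@delete M e) -> dctree M.

Definition push_mto (M : pmatroid) (e : ground M) (N : pmatroid)
  (g : ground N -> dcground e) (p : mto N) : mto M :=
  existT _ (projT1 p) (fun x => val (g (projT2 p x))).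

Fixpoint leaves (M : pmatroid) (t : dctree M) : seq (mto M) :=
  match t with
  | DCLeaf M => [:: existT _ M id]
  | DCUnary M t' => leaves t'
  | @DCBinary M e swap _ tc td =>
      let lc := map (@push_mto M e (@contract M e) id) (leaves tc) in
      let ld := map (@push_mto M e (@delete M e) id) (leaves td) in
      if swap then ld ++ lc else lc ++ ld
  end.

(* Tutte covering: the family {A i -> M} is, up to a natural isomorphism with
   an elementary deletion-contraction tree (root matroid M0, root iso
   alpha : M ~ M0, leaf isos beta), the family of leaf morphisms, with the
   leaves enumerated in an arbitrary order (bijection phi). *)
Definition tutte_covering (M : pmatroid) (I : finType) (A : I -> mto M) : Prop :=
  exists (M0 : pmatroid) (t : dctree M0) (alpha : ground M -> ground M0)
         (phi : I -> 'I_(size (leaves t))),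
    [/\ is_iso alpha, bijective phi &
     forall i : I,
       let L := nth (existT _ M0 id) (leaves t) (phi i) in
       exists beta : ground (projT1 (A i)) -> ground (projT1 L),
         is_iso beta /\ (alpha \o projT2 (A i)) =1 (projT2 L \o beta)].

Definition refines (M : pmatroid) (I J : finType) (A : I -> mto M) (B : J -> mto M) : Prop :=
  forall i : I, exists (j : J) (h : ground (projT1 (A i)) -> ground (projT1 (B j))),
    is_morphism h /\ projT2 (A i) =1 projT2 (B j) \o h.

(* A leaf with a non-degenerate element can be split once more by deletion and
   contraction; since each split shrinks the ground set, grafting a maximal
   decomposition onto every leaf yields a tree whose leaves are all
   indecomposable.  Each new leaf maps into the old leaf it grew from by a
   composite of the inclusions M/e -> M and M\e -> M, which are morphisms
   because independence is hereditary; the given isomorphisms of the covering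
   transport this back to the original family. *)
From mathcomp Require Import all_boot.
From Stdlib Require List.

Set Implicit Arguments. Unset Strict Implicit. Unset Printing Implicit Defensive.

Section ListIn.
Variable T : Type.

Lemma In_cat (x : T) (s1 s2 : seq T) :
  List.In x (s1 ++ s2) <-> List.In x s1 \/ List.In x s2.
Proof. by elim: s1 => [|y s IH] /=; tauto. Qed.

Lemma In_map (U : Type) (f : T -> U) (y : U) (s : seq T) :
  List.In y (map f s) <-> exists2 x, List.In x s & y = f x.
Proof.
elim: s => [|x s IH] /=; first by split=> [[]|[]].
split=> [[<-|/IH [z Hz ->]]|[z [<-|Hz] Ey]].
- by exists x; [left|].
- by exists z; [right|].
- by left; rewrite Ey.
- by right; apply/IH; exists z.
Qed.

Lemma nth_In (d : T) (s : seq T) j : j < size s -> List.In (nth d s j) s.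
Proof. by elim: s j => [|x s IH] [|j] //= Hj; [left | right; apply: IH]. Qed.

Lemma In_nth (d x : T) (s : seq T) :
  List.In x s -> exists2 j, j < size s & nth d s j = x.
Proof.
elim: s => [|y s IH] //= [->|/IH [j Hj <-]]; first by exists 0.
by exists j.+1.
Qed.

End ListIn.

Definition hereditary (N : pmatroid) : Prop :=
  forall I J : {set ground N}, J \subset I -> indep N I -> indep N J.

Lemma matroid_hereditary N : is_matroid N -> hereditary N.
Proof. by case. Qed.

Lemma hereditary_contract N (e : ground N) : hereditary N -> hereditary (contract e).
Proof.
move=> HN I J sJI /=; case: ifP => _; apply: HN; last apply: setSU; exact: imsetS.
Qed.

Lemma hereditary_delete N (e : ground N) : hereditary N -> hereditary (delete e).
Proof. by move=> HN I J sJI; apply: HN; apply: imsetS. Qed.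

Lemma card_dcground N (e : ground N) : #|dcground e| < #|ground N|.
Proof. by rewrite card_sig cardC1 (cardD1 e) inE. Qed.

Lemma morph_id N : is_morphism (@id (ground N)).
Proof. by split=> // I; rewrite imset_id. Qed.

Lemma morph_comp (N1 N2 N3 : pmatroid) (f : ground N2 -> ground N3) (g : ground N1 -> ground N2) :
  is_morphism f -> is_morphism g -> is_morphism (f \o g).
Proof.
move=> [f_inj f_indep] [g_inj g_indep]; split; first exact: inj_comp.
by move=> I HI; rewrite imset_comp; apply/f_indep/g_indep.
Qed.

Lemma morph_contract N (e : ground N) :
  hereditary N -> is_morphism (val : ground (contract e) -> ground N).
Proof.
move=> HN; split=> [|I /=]; first exact: val_inj.
by case: ifP => _ // /HN; apply; apply: subsetUl.
Qed.

Lemma morph_delete N (e : ground N) : is_morphism (val : ground (delete e) -> ground N).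
Proof. by split; first exact: val_inj. Qed.

Lemma iso_id N : is_iso (@id (ground N)).
Proof. by split=> [|I]; [exists id | rewrite imset_id]. Qed.

Lemma iso_morph N1 N2 (f : ground N1 -> ground N2) : is_iso f -> is_morphism f.
Proof. by case=> /bij_inj f_inj f_indep; split=> // I; rewrite f_indep. Qed.

Lemma imsetK (T U : finType) (f : T -> U) (g : U -> T) :
  cancel g f -> forall J : {set U}, f @: (g @: J) = J.
Proof. by move=> gK J; rewrite -imset_comp (eq_imset _ gK) imset_id. Qed.

Lemma iso_inv_morph N1 N2 (f : ground N1 -> ground N2) g :
  is_iso f -> cancel g f -> is_morphism g.
Proof.
move=> [_ f_indep] gK; split=> [|I HI]; first exact: can_inj gK.
by rewrite -f_indep imsetK.
Qed.

Lemma iso_hereditary N1 N2 (f : ground N1 -> ground N2) :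
  is_iso f -> hereditary N1 -> hereditary N2.
Proof.
move=> f_iso HN1 I J sJI; have [[g _ gK] _] := f_iso.
have [_ g_indep] := iso_inv_morph f_iso gK.
have [_ f_indep] := iso_morph f_iso.
by move=> /g_indep /(HN1 _ _ (imsetS g sJI)) /f_indep; rewrite imsetK.
Qed.

Definition factors_through N (x y : mto N) : Prop :=
  exists g : ground (projT1 x) -> ground (projT1 y),
    is_morphism g /\ projT2 x =1 projT2 y \o g.

Lemma factors_through_push N (e : ground N) N' (g : ground N' -> dcground e) (x y : mto N') :
  factors_through x y -> factors_through (push_mto g x) (push_mto g y).
Proof. by case=> h [h_morph Exy]; exists h; split=> // w /=; rewrite Exy. Qed.

Lemma In_leaves_binary N (e : ground N) swap (He : nondegenerate e)
    (tc : dctree (contract e)) (td : dctree (delete e)) (x : mto N) :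
  List.In x (leaves (DCBinary swap He tc td)) <->
  (exists2 z, List.In z (leaves tc) & x = push_mto (id : _ -> ground (contract e)) z)
  \/ (exists2 z, List.In z (leaves td) & x = push_mto (id : _ -> ground (delete e)) z).
Proof. by rewrite /=; case: swap; rewrite In_cat !In_map; tauto. Qed.

Lemma leaves_morph N (t : dctree N) :
  hereditary N -> forall x, List.In x (leaves t) -> is_morphism (projT2 x).
Proof.
elim: t => {N} [N|N t IH|N e s He tc IHc td IHd] HN x.
- by case=> [<-|//]; apply: morph_id.
- exact: IH.
- case/In_leaves_binary => -[z Hz ->].
  + exact (morph_comp (morph_contract e HN) (IHc (hereditary_contract HN) z Hz)).
  + exact (morph_comp (morph_delete e) (IHd (hereditary_delete HN) z Hz)).
Qed.

Fixpoint full_dctree (n : nat) (N : pmatroid) : dctree N :=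
  if n is n'.+1 then
    match [pick e : {e : ground N | nondegenerate e}] with
    | Some e => DCBinary false (valP e) (full_dctree n' _) (full_dctree n' _)
    | None => DCLeaf N
    end
  else DCLeaf N.

Lemma full_dctree_indecomposable n N :
  #|ground N| <= n -> forall x, List.In x (leaves (full_dctree n N)) -> indecomposable (projT1 x).
Proof.
elim: n N => [|n IH] N Hcard x /=.
  by case=> [<-|//] e; move: Hcard; rewrite leqn0 => /eqP/card0_eq/(_ e); rewrite inE.
case: pickP => [[e He] _ | no_nondeg].
  have smaller (e' : ground N) : #|dcground e'| <= n.
    by rewrite -ltnS (leq_trans (card_dcground e') Hcard).
  by case/In_leaves_binary => -[z Hz ->]; apply: IH Hz; apply: smaller.
case=> [<-|//] e; apply/negPn/negP => He.
by have := no_nondeg (exist _ e He).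
Qed.

Fixpoint saturate N (t : dctree N) : dctree N :=
  match t with
  | DCLeaf N => full_dctree #|ground N| N
  | DCUnary _ t' => DCUnary (saturate t')
  | DCBinary _ _ swap He tc td => DCBinary swap He (saturate tc) (saturate td)
  end.

Lemma saturate_indecomposable N (t : dctree N) x :
  List.In x (leaves (saturate t)) -> indecomposable (projT1 x).
Proof.
elim: t x => {N} [N|N t IH|N e s He tc IHc td IHd] x.
- exact: full_dctree_indecomposable.
- exact: IH.
- by case/In_leaves_binary => -[z Hz ->]; [apply: IHc | apply: IHd].
Qed.

Lemma saturate_factors N (t : dctree N) :
  hereditary N -> forall x, List.In x (leaves (saturate t)) ->
  exists2 y, List.In y (leaves t) & factors_through x y.
Proof.
elim: t => {N} [N|N t IH|N e s He tc IHc td IHd] HN x.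
- move=> Hx; exists (existT _ N id); first by left.
  by exists (projT2 x); split=> //; apply: leaves_morph Hx.
- exact: IH.
- case/In_leaves_binary => -[z Hz ->].
  + have [y Hy Hzy] := IHc (hereditary_contract HN) z Hz.
    exists (push_mto (id : _ -> ground (contract e)) y); last exact: factors_through_push.
    by apply/In_leaves_binary; left; exists y.
  + have [y Hy Hzy] := IHd (hereditary_delete HN) z Hz.
    exists (push_mto (id : _ -> ground (delete e)) y); last exact: factors_through_push.
    by apply/In_leaves_binary; right; exists y.
Qed.

Definition leaf_family M N (ainv : ground N -> ground M) (s : seq (mto N)) :
    'I_(size s) -> mto M :=
  fun k => let L := nth (existT _ N id) s k in existT _ (projT1 L) (ainv \o projT2 L).
Arguments leaf_family {M N} ainv s.

Section LeafFamily.
Variables (M N : pmatroid) (t : dctree N).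
Variables (alpha : ground M -> ground N) (ainv : ground N -> ground M).
Hypotheses (alpha_iso : is_iso alpha) (alphaK : cancel alpha ainv) (ainvK : cancel ainv alpha).

Lemma leaf_family_covering : tutte_covering (leaf_family ainv (leaves t)).
Proof.
exists N, t, alpha, id; split=> //; first by exists id.
move=> k; exists id; split; first exact: iso_id.
by move=> w /=; rewrite ainvK.
Qed.

Variables (I : finType) (A : I -> mto M) (phi : I -> 'I_(size (leaves t))).
Hypothesis phi_bij : bijective phi.
Hypothesis A_leaves : forall i : I,
  let L := nth (existT _ N id) (leaves t) (phi i) in
  exists beta : ground (projT1 (A i)) -> ground (projT1 L),
    is_iso beta /\ (alpha \o projT2 (A i)) =1 (projT2 L \o beta).

Lemma leaf_family_refines (s : seq (mto N)) :
  (forall x, List.In x s -> exists2 y, List.In y (leaves t) & factors_through x y) ->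
  refines (leaf_family ainv s) A.
Proof.
move=> s_factors k.
have [y Hy [g [g_morph Eg]]] := s_factors _ (nth_In (existT _ N id) (ltn_ord k)).
have [j Hj Ey] := In_nth (existT _ N id) Hy.
have [phinv _ phinvK] := phi_bij.
exists (phinv (Ordinal Hj)).
have := A_leaves (phinv (Ordinal Hj)); rewrite /= phinvK /= Ey.
case=> beta [beta_iso Ebeta]; have [[binv _ binvK] _] := beta_iso.
exists (binv \o g); split; first exact: morph_comp (iso_inv_morph beta_iso binvK) g_morph.
move=> w /=; rewrite Eg /=.
by have := Ebeta (binv (g w)); rewrite /= binvK => <-; rewrite alphaK.
Qed.

End LeafFamily.

Theorem proposition3p6 (M : pmatroid) (HM : is_matroid M)
  (I : finType) (A : I -> mto M) (HA : tutte_covering A) :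
  exists (K : finType) (A' : K -> mto M),
    [/\ tutte_covering A', refines A' A &
        forall k : K, indecomposable (projT1 (A' k))].
Proof.
have [N [t [alpha [phi [alpha_iso phi_bij A_leaves]]]]] := HA.
have [[ainv alphaK ainvK] _] := alpha_iso.
have HN := iso_hereditary alpha_iso (matroid_hereditary HM).
exists _, (leaf_family ainv (leaves (saturate t))); split.
- exact: leaf_family_covering alpha_iso ainvK.
- apply: (leaf_family_refines alphaK phi_bij A_leaves); exact: saturate_factors.
- by move=> k; apply: saturate_indecomposable (nth_In _ (ltn_ord k)).
Qed.
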